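(* Every arrow $w\in\mathcal A$ of the groupoid $\mathcal G_N$ can be represented as a reduced word in a unique way. This reduced word is either an empty word (a unit $e_i$) or, for some $d\ge 1$, a product of the form $$w=A_{i_1,i_2}^{(k)}A_{i_2,i_3}^{(-k)}A_{i_3,i_4}^{(k)}\cdots A_{i_d,i_{d+1}}^{((-1)^{d+1}k)}$$ with $k\in\{-1,1\}$ and $i_\ell\neq i_{\ell+1}$ for all $1\le \ell\le d$.
   Context: Fix an integer $N\ge 3$. Let $\mathcal G_N$ be the groupoid with object set $\{1,\dots,N\}$ generated by the arrows $A_{i,j}^{(k)}$, $i\neq j\in\{1,\dots,N\}$, $k\in\{-1,1\}$, where $A_{i,j}^{(k)}$ has source $i$ and target $j$, subject to the relations $A_{i,j}^{(k)}A_{j,\ell}^{(k)}=A_{i,\ell}^{(k)}$ for all $i,j,\ell\in\{1,\dots,N\}$, $k\in\{-1,1\}$, with the convention $A_{i,i}^{(k)}:=e_i$, the unit arrow at object $i$. A composition $fg$ is defined when the target of $f$ equals the source of $g$. Let $\mathcal A$ denote the set of arrows. A word is a composition of finitely many generators $A_{i,j}^{(k)}$ ($i\ne j$); the units $e_i$ are called empty words. A nonempty word is reduced if the generating relations cannot be applied to it so as to reduce the number of generators used; empty words are also considered reduced. Two words represent the same arrow iff one can be transformed into the other by repeated application of the generating relations. *)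

From mathcomp Require Import all_boot.
From Stdlib Require Import Relations.
Set Implicit Arguments. Unset Strict Implicit. Unset Printing Implicit Defensive.

(* A generator A_{i,j}^{(k)} of G_N is encoded as the triple (i, j, b),
   objects being 'I_N (object m+1 of the paper is the ordinal m), and the
   sign k in {-1,1} encoded by b : bool with  true <-> k = 1,
   false <-> k = -1 (so k -> -k is b -> ~~ b). *)
Definition gen (N : nat) := ('I_N * 'I_N * bool)%type.
Definition gsrc N (g : gen N) : 'I_N := g.1.1.
Definition gtgt N (g : gen N) : 'I_N := g.1.2.
Definition gsgn N (g : gen N) : bool := g.2.

(* A word is given by its source object together with the list of
   generators composed (left to right); the empty list at source i is e_i. *)
Definition word (N : nat) := ('I_N * seq (gen N))%type.

Fixpoint chain N (s : 'I_N) (l : seq (gen N)) : bool :=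
  if l is g :: l' then [&& gsrc g == s, gsrc g != gtgt g & chain (gtgt g) l']
  else true.

Definition wf_word N (w : word N) : bool := chain w.1 w.2.

(* Result of applying the relation A_{i,j}^{(k)} A_{j,l}^{(k)} = A_{i,l}^{(k)}
   (with A_{i,i}^{(k)} = e_i) to the pair (g1, g2). *)
Definition contract N (g1 g2 : gen N) : seq (gen N) :=
  if gsrc g1 == gtgt g2 then [::] else [:: (gsrc g1, gtgt g2, gsgn g1)].

Definition contr_step N (w w' : word N) : Prop :=
  wf_word w /\ wf_word w' /\ w.1 = w'.1 /\
  exists (u v : seq (gen N)) (g1 g2 : gen N),
    [/\ gtgt g1 = gsrc g2, gsgn g1 = gsgn g2,
        w.2 = u ++ [:: g1; g2] ++ v & w'.2 = u ++ contract g1 g2 ++ v].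

Definition rel_step N (w w' : word N) : Prop := contr_step w w' \/ contr_step w' w.

Definition word_equiv N : relation (word N) := clos_refl_sym_trans _ (@rel_step N).

Definition reduced N (w : word N) : Prop :=
  wf_word w /\
  ~ (exists w' : word N, rel_step w w' /\ size w'.2 < size w.2).

From mathcomp Require Import all_boot.
From Stdlib Require Import Relations.
Set Implicit Arguments. Unset Strict Implicit. Unset Printing Implicit Defensive.

(* Push the generators of a word one at a time, from right to left, onto an
   alternating word (consecutive letters of opposite signs): a letter with the
   sign of the current head is contracted with it, any other letter is
   prepended.  Pushing A_{j,l}^(k) and then A_{i,j}^(k) onto an alternating word
   gives the same result as pushing their contraction, so the resulting normal
   form is an invariant of the arrow; it is also reached from the word by
   contractions.  An alternating word admits no contraction, and an expansion
   only lengthens it, so the reduced words are exactly the alternating ones,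
   each its own normal form. *)

Arguments gsrc [N] !g /.
Arguments gtgt [N] !g /.
Arguments gsgn [N] !g /.
Arguments contract [N] !g1 !g2 /.

Section NormalForm.
Variable N : nat.
Implicit Types (g h : gen N) (s : 'I_N) (l u v t : seq (gen N)) (w : word N).

Definition alternating l := sorted (fun g h => gsgn g != gsgn h) l.

Definition push g l : seq (gen N) :=
  if l is h :: t then if gsgn g == gsgn h then contract g h ++ t else g :: l
  else [:: g].

Definition normal_form l := foldr push [::] l.

Definition normal_word w : word N := (w.1, normal_form w.2).

Lemma alternating_push g l : alternating l -> alternating (push g l).
Proof.
rewrite /alternating; case: l => [|h t] //= alt_ht.
case: ifP => [/eqP same | flip]; last by rewrite /= flip.
rewrite /contract; case: ifP => _ /=; first exact: path_sorted alt_ht.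
by case: t alt_ht => //= h' t; rewrite same.
Qed.

Lemma normal_form_alternating l : alternating (normal_form l).
Proof. by elim: l => //= g l; apply: alternating_push. Qed.

Lemma push_alternating g l : alternating (g :: l) -> push g l = g :: l.
Proof. by case: l => //= h t /andP[/negbTE ->]. Qed.

Lemma normal_form_id l : alternating l -> normal_form l = l.
Proof.
elim: l => //= g l IH alt_gl.
by rewrite IH ?push_alternating //; exact: path_sorted alt_gl.
Qed.

Lemma chain_push g l :
  gsrc g != gtgt g -> chain (gtgt g) l -> chain (gsrc g) (push g l).
Proof.
case: g => [[a b] k]; case: l => [|[[c d] k'] t] /= ab.
  by rewrite eqxx ab.
case/and3P=> /eqP -> bd chain_t.
case: ifP => _ /=; last by rewrite !eqxx ab bd.
by rewrite /contract /=; case: (eqVneq a d) => [->|ad] //=; rewrite eqxx ad.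
Qed.

Lemma normal_form_chain s l : chain s l -> chain s (normal_form l).
Proof.
elim: l s => //= g l IH s /and3P[/eqP <- nloop /IH].
exact: chain_push.
Qed.

Lemma chain_cat s u v :
  chain s (u ++ v) = chain s u && chain (last s [seq gtgt g | g <- u]) v.
Proof. by elim: u s => //= g u IH s; rewrite IH !andbA. Qed.

Lemma chain_contract s g1 g2 v :
  chain s [:: g1, g2 & v] -> chain s (contract g1 g2 ++ v).
Proof.
case: g1 g2 => [[a b] k] [[b' c] k'] /= /and5P[/eqP <- _ /eqP -> _ chain_v].
by rewrite /contract /=; case: (eqVneq a c) => [-> | ac] //=; rewrite eqxx ac.
Qed.

Lemma size_contract_lt u g1 g2 v :
  size (u ++ contract g1 g2 ++ v) < size (u ++ [:: g1, g2 & v]).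
Proof.
by rewrite !size_cat ltn_add2l /contract; case: ifP => _ /=; rewrite ?add1n.
Qed.

Lemma contr_step_contract s u g1 g2 v :
  chain s (u ++ [:: g1, g2 & v]) -> gsgn g1 = gsgn g2 ->
  contr_step (s, u ++ [:: g1, g2 & v]) (s, u ++ contract g1 g2 ++ v).
Proof.
move=> chain_w same; split=> //; split.
  by move: chain_w; rewrite /wf_word /= !(chain_cat s u) => /andP[-> /chain_contract].
split=> //; exists u, v, g1, g2; split=> //.
by move: chain_w; rewrite chain_cat => /andP[_ /and5P[_ _ /eqP]].
Qed.

Lemma push_contract g1 g2 l :
  gsrc g1 != gtgt g1 -> gtgt g1 = gsrc g2 -> gsgn g1 = gsgn g2 ->
  chain (gtgt g2) l -> alternating l ->
  push g1 (push g2 l) = foldr push l (contract g1 g2).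
Proof.
case: g1 g2 => [[a b] k] [[b' c] k'] /= ab <- <- {b' k'}.
case: l => [|[[c' d] k'] t] /=.
  by rewrite eqxx; case: (eqVneq a c).
case/and3P=> /eqP -> {c'} cd _; case: (eqVneq k k') => [<- | kk'] alt_t; last first.
  rewrite /= eqxx /=; case: (eqVneq a c) => //= _.
  by rewrite (negbTE kk').
case: (eqVneq b d) => [<- | bd] /=.
  have alt_abt : alternating ((a, b, k) :: t) by case: t alt_t.
  rewrite push_alternating //; case: (eqVneq a c) => [-> // | ac] /=.
  by rewrite eqxx (negbTE ab).
rewrite eqxx; case: (eqVneq a c) => [-> | ac] /=; first by rewrite (negbTE cd).
by rewrite eqxx.
Qed.

Lemma normal_word_contr_step w w' :
  contr_step w w' -> normal_word w = normal_word w'.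
Proof.
case: w w' => [s l] [s' l'] [wf_l [_ [/= <- [u [v [g1 [g2 [tgt_src same E E']]]]]]]].
move: wf_l; rewrite /wf_word /= E' E chain_cat => /andP[_ /and3P[_ nloop /and3P[_ _ chain_v]]].
rewrite /normal_word /normal_form /= !foldr_cat; congr (_, foldr _ _ _).
apply: push_contract => //; first exact: normal_form_chain.
exact: normal_form_alternating.
Qed.

Lemma normal_word_equiv w w' : word_equiv w w' -> normal_word w = normal_word w'.
Proof.
elim=> [x y [step | step] | x | x y _ -> | x y z _ -> _ ->] //.
  exact: normal_word_contr_step.
by rewrite (normal_word_contr_step step).
Qed.

Lemma word_equiv_normal_form s u l :
  chain s (u ++ l) -> word_equiv (s, u ++ l) (s, u ++ normal_form l).
Proof.
elim: l u => [|g l IH] u chain_ul; first exact: rst_refl.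
rewrite -cat_rcons in chain_ul *.
apply: rst_trans (IH _ chain_ul) _; rewrite cat_rcons /=.
move: chain_ul; rewrite cat_rcons chain_cat => /andP[chain_u /and3P[src nloop]].
move/normal_form_chain; case: (normal_form l) => [|h t] chain_ht /=.
  exact: rst_refl.
case: ifP => [/eqP same | _]; last exact: rst_refl.
apply: rst_step; left; apply: contr_step_contract => //.
by rewrite chain_cat chain_u /= src nloop.
Qed.

Lemma alternatingPn l :
  ~~ alternating l ->
  exists u g1 g2 v, l = u ++ [:: g1, g2 & v] /\ gsgn g1 = gsgn g2.
Proof.
elim: l => [|g l IH] //; case: l IH => [|h t] // IH.
rewrite /alternating /= negb_and => /orP[/negPn/eqP same | /IH].
  by exists [::], g, h, t.
by case=> u [g1 [g2 [v [-> same]]]]; exists (g :: u), g1, g2, v.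
Qed.

Lemma reduced_iff_alternating w : reduced w <-> wf_word w /\ alternating w.2.
Proof.
case: w => s l; split=> [[wf_l irreducible] | [wf_l alt_l]].
  split=> //=; apply/negPn/negP => /alternatingPn [u [g1 [g2 [v [E same]]]]].
  subst l; apply: irreducible; exists (s, u ++ contract g1 g2 ++ v).
  by rewrite size_contract_lt; split=> //; left; apply: contr_step_contract.
split=> // -[w' [[step | step] shorter]].
  case: step => _ [_ [_ [u [v [g1 [g2 [_ same E _]]]]]]].
  move: alt_l; rewrite /= in E; rewrite E /alternating sorted_cat_cons /=.
  by rewrite same eqxx andbF.
case: step => _ [_ [_ [u [v [g1 [g2 [_ _ E' E]]]]]]].
rewrite /= in E E'; by move: shorter; rewrite E E' ltnNge ltnW ?size_contract_lt.
Qed.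

Lemma chain_alternating_shape s g l :
  chain s (g :: l) -> alternating (g :: l) ->
  exists i : nat -> 'I_N,
    [/\ forall n, n <= size l -> i n != i n.+1, s = i 0 &
        g :: l = [seq (i n, i n.+1, gsgn g (+) odd n) | n <- iota 0 (size l).+1]].
Proof.
elim: l s g => [|h l IH] s [[a b] k].
  case/and3P=> /eqP <- ab _ _; exists (fun n => if n is 0 then a else b).
  by split=> [[|n] // _ | | ]; rewrite /= ?addbF.
case/and3P=> /eqP <- ab chain_hl /andP[flip alt_hl].
have [i [i_ne i0 E]] := IH _ _ chain_hl alt_hl.
exists (fun n => if n is m.+1 then i m else a); split=> //.
  by case=> [_ | n]; [rewrite /= -i0 | exact: i_ne].
have iota_shift : iota 0 (size l).+2 = 0 :: map (addn 1) (iota 0 (size l).+1).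
  by rewrite -iotaDl.
rewrite iota_shift map_cons -map_comp E; congr (_ :: _); first by rewrite /= addbF -i0.
have sgn_h : gsgn h = ~~ k by move: flip; case: (gsgn h); case: (k).
by apply: eq_map => n /=; rewrite sgn_h addNb addbN.
Qed.

End NormalForm.

Theorem lemma2p1 (N : nat) (HN : 3 <= N) (w : word N) (Hw : wf_word w) :
  exists r : word N,
    [/\ reduced r, word_equiv w r,
        (forall r' : word N, reduced r' -> word_equiv w r' -> r' = r) &
        (r.2 = [::] \/
         exists (d : nat) (k : bool) (i : nat -> 'I_N),
           [/\ 1 <= d, (forall l, l < d -> i l != i l.+1), r.1 = i 0 &
               r.2 = [seq (i l, i l.+1, k (+) odd l) | l <- iota 0 d]])].
Proof.
case: w Hw => s l wf_l.
have wf_nf : chain s (normal_form l) by exact: normal_form_chain.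
have alt_nf := normal_form_alternating l.
exists (s, normal_form l); split.
- exact/reduced_iff_alternating.
- exact: word_equiv_normal_form [::] l wf_l.
- move=> [s' l'] /reduced_iff_alternating[_ /= alt_l'] /normal_word_equiv.
  by rewrite /normal_word /= (normal_form_id alt_l') => ->.
- case: (normal_form l) wf_nf alt_nf => [|g t] wf_nf alt_nf; [by left | right].
  have [i [i_ne i0 E]] := chain_alternating_shape wf_nf alt_nf.
  by exists (size t).+1, (gsgn g), i.
Qed.
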